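(* Every equivalence class (under $\sim$) of balanced words contains a unique reduced word, and this reduced word is the minimal word of the equivalence class with respect to alphabetical order.
   Context: $\mathcal{A}$ is the free associative $\mathbb{C}$-algebra on noncommuting generators $L,R$; words are finite products of these letters, and a subword is a contiguous block of letters. A word is balanced if it contains equally many $L$'s and $R$'s. $\mathcal{J}$ is the two-sided ideal generated by $\{FG-GF : F,G \text{ nonempty balanced words}\}$, and $X\sim Y$ means $X-Y\in\mathcal{J}$ (equivalence classes of words are finite). Alphabetical order is the lexicographic order on words with $L$ before $R$, a proper prefix coming before its extensions (e.g. $LL<LLR$, $LLL<LR$). A word is prime if it is nonempty, balanced, and not a product of two nonempty balanced words. For a balanced word $W=a_1\cdots a_n$, $e_k(W)=\sum_{i=1}^k\overline{a_i}$ with $\overline{R}=1$, $\overline{L}=-1$. A prime $P$ of length $n$ is an upper prime if $e_k(P)>0$ for $1\le k\le n-1$, and a lower prime if $e_k(P)<0$ for $1\le k\le n-1$. A word is reduced if it contains no subword $UD$ with $U$ an upper prime and $D$ a lower prime. *)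

From HB Require Import structures.
From mathcomp Require Import all_boot all_order all_algebra.
From mathcomp Require Import complex.
From mathcomp Require Import Rstruct.
From Stdlib Require Reals.
Set Implicit Arguments. Unset Strict Implicit. Unset Printing Implicit Defensive.
Import Order.TTheory GRing.Theory Num.Theory.

Definition CC := (Rdefinitions.R)[i].

Definition word := seq bool.
Definition LL : bool := false.
Definition RR : bool := true.

Definition balanced (W : word) : bool := count (pred1 LL) W == count (pred1 RR) W.

(* nonempty balanced words F, G generate J via FG - GF *)
Definition nebal (W : word) : bool := (W != [::]) && balanced W.

(* An element of the free algebra A = C<L,R>, given by its coefficient
   function on the basis of words.  The element X - Y for words X, Y: *)
Definition word_diff (X Y : word) : word -> CC :=
  fun w => ((X == w)%:R - (Y == w)%:R)%R.

(* A generator term  c * U (F G - G F) V  of J. *)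
Record jterm := JTerm { jc : CC; jU : word; jF : word; jG : word; jV : word }.

Definition jterm_coeff (t : jterm) (w : word) : CC :=
  (jc t * (((jU t ++ jF t ++ jG t ++ jV t) == w)%:R
           - ((jU t ++ jG t ++ jF t ++ jV t) == w)%:R))%R.

(* Membership in the two-sided ideal J generated by {FG - GF : F, G nonempty
   balanced}: f is a finite C-linear combination of elements U (FG - GF) V
   with U, V words (words span A, so these span J). *)
Definition inJ (f : word -> CC) : Prop :=
  exists ts : seq jterm,
    (forall t, List.In t ts -> nebal (jF t) /\ nebal (jG t)) /\
    forall w, f w = (\sum_(t <- ts) jterm_coeff t w)%R.

Definition equiv_words (X Y : word) : Prop := inJ (word_diff X Y).

Fixpoint alph_le (u v : word) : bool :=
  match u, v with
  | [::], _ => true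
  | _ :: _, [::] => false
  | a :: u', b :: v' => if a == b then alph_le u' v' else (a == LL) && (b == RR)
  end.

Definition prime_word (P : word) : Prop :=
  nebal P /\ ~ (exists F G, nebal F /\ nebal G /\ P = F ++ G).

Definition letter_val (a : bool) : int := if a == RR then 1%R else (-1)%R.
Definition e_k (k : nat) (W : word) : int := (\sum_(a <- take k W) letter_val a)%R.

Definition upper_prime (P : word) : Prop :=
  prime_word P /\ forall k, (1 <= k <= (size P).-1)%N -> (0 < e_k k P)%R.
Definition lower_prime (P : word) : Prop :=
  prime_word P /\ forall k, (1 <= k <= (size P).-1)%N -> (e_k k P < 0)%R.

Definition reduced (W : word) : Prop :=
  ~ (exists s1 U D s2, upper_prime U /\ lower_prime D /\ W = s1 ++ U ++ D ++ s2).

From mathcomp Require Import all_boot all_order all_algebra.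
From mathcomp Require Import complex Rstruct zify boolp.
Import Order.TTheory GRing.Theory Num.Theory.
Set Implicit Arguments. Unset Strict Implicit. Unset Printing Implicit Defensive.
Local Open Scope ring_scope.

(** Read a word as a lattice path, R going up and L going down, and record its
    steps as pairs (starting height, letter).  Swapping two adjacent balanced
    blocks only permutes these steps, so their multiset is an invariant of ~:
    summing the coefficients of an element of J over the words of a given
    length and a given multiset of steps gives 0.

    A reduced word is recovered from this multiset letter by letter.  If a
    reduced word starting with R at height h ever steps down from h, the part
    before that step ends with an upper prime, so what follows may never come
    back to h (it would start with a lower prime); hence it steps down from h
    exactly once and ends below h.  A word starting with L that ends below h
    and steps up from h must step down from h a second time.  So two reduced
    words with the same steps start with the same letter.

    Finally the alphabetically least word of a class is reduced, because
    replacing a factor UD (U upper, D lower, so U starts with R and D with L)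
    by DU gives a smaller equivalent word. *)

Definition height (x : word) : int := \sum_(a <- x) letter_val a.

Lemma letter_valR : letter_val RR = 1. Proof. by []. Qed.
Lemma letter_valL : letter_val LL = -1. Proof. by []. Qed.

Lemma height_nil : height [::] = 0. Proof. exact: big_nil. Qed.

Lemma height_cons a x : height (a :: x) = letter_val a + height x.
Proof. exact: big_cons. Qed.

Lemma height_cat x y : height (x ++ y) = height x + height y.
Proof. exact: big_cat. Qed.

Lemma e_kE k W : e_k k W = height (take k W). Proof. by []. Qed.

Lemma e_k1 a W : e_k 1 (a :: W) = letter_val a.
Proof. by rewrite e_kE /= take0 height_cons height_nil addr0. Qed.

Lemma balancedE x : balanced x = (height x == 0).
Proof.
have -> : height x = (count (pred1 RR) x)%:Z - (count (pred1 LL) x)%:Z.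
  elim: x => [|a x IH]; rewrite ?height_nil ?height_cons //= -/(height x) IH.
  by case: a; rewrite ?letter_valR ?letter_valL /=; lia.
by rewrite /balanced; apply/eqP/eqP; lia.
Qed.

Lemma nebalE x : nebal x = (x != [::]) && (height x == 0).
Proof. by rewrite /nebal balancedE. Qed.

Fixpoint steps (h : int) (x : word) : seq (int * bool) :=
  if x is a :: x' then (h, a) :: steps (h + letter_val a) x' else [::].

Lemma steps_cat h x y : steps h (x ++ y) = steps h x ++ steps (h + height x) y.
Proof.
elim: x h => [|a x IH] h /=; first by rewrite height_nil addr0.
by rewrite IH height_cons addrA.
Qed.

Lemma map_snd_steps h x : map snd (steps h x) = x.
Proof. by elim: x h => [|a x IH] h //=; rewrite IH. Qed.

Lemma perm_steps_size h x y : perm_eq (steps h x) (steps h y) -> size x = size y.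
Proof. by move=> /(perm_map snd) /perm_size; rewrite !map_snd_steps. Qed.

Lemma perm_steps_height h x y :
  perm_eq (steps h x) (steps h y) -> height x = height y.
Proof. by move=> /(perm_map snd); rewrite !map_snd_steps; apply: perm_big. Qed.

Lemma steps_split g b h x : (g, b) \in steps h x ->
  exists p z, [/\ x = p ++ b :: z, h + height p = g & (g, b) \notin steps h p].
Proof.
elim: x h => [|a x IH] h //=; rewrite in_cons.
have [[-> ->] _|ne /IH [p [z [-> hp nin]]]] := altP eqP.
  by exists [::], x; rewrite height_nil addr0.
exists (a :: p), z; split => //; first by rewrite height_cons addrA.
by rewrite /= in_cons negb_or ne.
Qed.

Lemma steps_cross_up (c h : int) y : h <= c < h + height y -> (c, RR) \in steps h y.
Proof.
elim: y h => [|a y IH] h; rewrite ?height_nil ?height_cons; first lia.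
move=> hc /=; rewrite in_cons; case: a hc => hc; rewrite ?letter_valR ?letter_valL in hc *.
  by have [->|ne] := eqVneq c h; rewrite ?eqxx // IH ?orbT //; lia.
by rewrite IH ?orbT //; lia.
Qed.

Lemma steps_cross_down (c h : int) y : h + height y < c <= h -> (c, LL) \in steps h y.
Proof.
elim: y h => [|a y IH] h; rewrite ?height_nil ?height_cons; first lia.
move=> hc /=; rewrite in_cons; case: a hc => hc; rewrite ?letter_valR ?letter_valL in hc *.
  by rewrite IH ?orbT //; lia.
by have [->|ne] := eqVneq c h; rewrite ?eqxx // IH ?orbT //; lia.
Qed.

Lemma nebal_size P : nebal P -> (1 < size P)%N.
Proof.
rewrite nebalE; case: P => [|a [|b P]] //=.
by rewrite height_cons height_nil addr0; case: a.
Qed.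

Lemma nebal_prime_prefix p : nebal p -> exists P s, prime_word P /\ p = P ++ s.
Proof.
elim: {p}_.+1 {-2}p (ltnSn (size p)) => // n IH p p_lt bal_p.
have [[F [G [bal_F [bal_G Ep]]]]|indec] :=
  pselect (exists F G, nebal F /\ nebal G /\ p = F ++ G); last first.
  by exists p, [::]; rewrite cats0.
subst p; have [|P [s [prime_P ->]]] := IH F _ bal_F.
  by move: p_lt (nebal_size bal_G); rewrite size_cat; lia.
by exists P, (s ++ G); rewrite catA.
Qed.

Lemma nebal_prime_suffix p : nebal p -> exists s P, prime_word P /\ p = s ++ P.
Proof.
elim: {p}_.+1 {-2}p (ltnSn (size p)) => // n IH p p_lt bal_p.
have [[F [G [bal_F [bal_G Ep]]]]|indec] :=
  pselect (exists F G, nebal F /\ nebal G /\ p = F ++ G); last first.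
  by exists [::], p.
subst p; have [|s [P [prime_P ->]]] := IH G _ bal_G.
  by move: p_lt (nebal_size bal_F); rewrite size_cat; lia.
by exists (F ++ s), P; rewrite catA.
Qed.

Lemma prime_take_height P k :
  prime_word P -> (0 < k < size P)%N -> height (take k P) != 0.
Proof.
move=> [bal_P indec] /andP [k_gt0 k_lt]; apply/negP => hk; apply: indec.
have hP : height (take k P) + height (drop k P) = 0.
  by rewrite -height_cat cat_take_drop; case/andP: bal_P => _; rewrite balancedE => /eqP.
exists (take k P), (drop k P); rewrite cat_take_drop !nebalE -!size_eq0 -!lt0n.
rewrite size_takel ?size_drop ?subn_gt0 ?k_gt0 ?k_lt ?hk; last exact: ltnW.
by do 2!split => //; apply/eqP; move: hk hP => /eqP ->; rewrite add0r.
Qed.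

Lemma prime_e_k_sign a P k : prime_word (a :: P) -> (0 < k <= size P)%N ->
  0 < letter_val a * e_k k (a :: P).
Proof.
move=> prime_aP; elim: k => [//|[|k] IH] /andP [_ k_le].
  by rewrite e_k1; case: (a).
have ek_step : e_k k.+2 (a :: P) = e_k k.+1 (a :: P) + letter_val (nth false P k).
  rewrite !e_kE (take_nth false (ltnW k_le : k.+1 < size (a :: P))%N).
  by rewrite -cats1 height_cat height_cons height_nil addr0.
have := prime_take_height (k := k.+2) prime_aP; rewrite -e_kE ek_step => /(_ k_le).
have := IH (ltnW k_le).
case: a {IH ek_step prime_aP}; case: (nth false P k);
  by rewrite ?letter_valR ?letter_valL; lia.
Qed.

Lemma prime_upper P : prime_word (RR :: P) -> upper_prime (RR :: P).
Proof.
by move=> prime_P; split => // k /prime_e_k_sign -/(_ _ prime_P); rewrite mul1r.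
Qed.

Lemma prime_lower P : prime_word (LL :: P) -> lower_prime (LL :: P).
Proof.
by move=> prime_P; split => // k /prime_e_k_sign -/(_ _ prime_P); rewrite mulN1r oppr_gt0.
Qed.

Lemma upper_prime_head U : upper_prime U -> exists U', U = RR :: U'.
Proof.
move=> [[bal_U _] pos_U]; have := nebal_size bal_U; have := pos_U 1%N.
by case: U {bal_U pos_U} => [|[] U'] //=; [exists U' | rewrite e_k1 => pos /pos].
Qed.

Lemma lower_prime_head D : lower_prime D -> exists D', D = LL :: D'.
Proof.
move=> [[bal_D _] neg_D]; have := nebal_size bal_D; have := neg_D 1%N.
by case: D {bal_D neg_D} => [|[] D'] //=; [rewrite e_k1 => neg /neg | exists D'].
Qed.

Lemma reduced_catr s x : reduced (s ++ x) -> reduced x.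
Proof.
move=> red_sx [s1 [U [D [s2 [HU [HD Ex]]]]]]; apply: red_sx.
by exists (s ++ s1), U, D, s2; rewrite Ex catA.
Qed.

Lemma reduced_upper_unbalanced s U q r :
  reduced (s ++ U ++ LL :: q ++ r) -> upper_prime U -> ~~ balanced (LL :: q).
Proof.
move=> red_x HU; apply/negP => bal_q.
have [D [t [prime_D Eq]]] := nebal_prime_prefix (p := LL :: q) bal_q.
have [D' ED] : exists D', D = LL :: D'.
  by case: D prime_D Eq => [[/andP []]|d D'] // _ [-> _]; exists D'.
subst D; apply: red_x; exists s, U, (LL :: D'), (t ++ r).
by split => //; split; [apply: prime_lower | rewrite -cat_cons Eq -catA].
Qed.

Lemma last_prime_upper h p : nebal p -> (h, LL) \notin steps h p ->
  exists s U, upper_prime U /\ p = s ++ U.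
Proof.
move=> bal_p no_descent; have [s [P [prime_P Ep]]] := nebal_prime_suffix bal_p.
have hs : height s = 0.
  move: bal_p prime_P.1; rewrite !nebalE Ep height_cat.
  by case/andP => _ /eqP sP /andP [_ /eqP hP]; rewrite hP addr0 in sP.
case: P prime_P Ep => [[/andP []]|[] P] // prime_P Ep.
  by exists s, (RR :: P); split => //; apply: prime_upper.
by move: no_descent; rewrite Ep steps_cat hs addr0 mem_cat /= in_cons eqxx orbT.
Qed.

Lemma reduced_descent_once h x :
  reduced (RR :: x) -> (h, LL) \in steps h (RR :: x) ->
  count_mem (h, LL) (steps h (RR :: x)) = 1%N /\ h + height (RR :: x) < h.
Proof.
move=> red_x /steps_split [p [z [Ex hp first]]].
have bal_p : nebal p.
  by rewrite nebalE; apply/andP; split; [case: p Ex {hp first} | apply/eqP; lia].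
have [s [U [HU Ep]]] := last_prime_upper bal_p first.
have red_z : reduced (s ++ U ++ LL :: z) by rewrite catA -Ep -Ex.
have avoid b : (h, b) \notin steps (h - 1) z.
  apply/negP => /steps_split [q [r [Ez hq _]]].
  have := @reduced_upper_unbalanced s U q (b :: r) _ HU; rewrite -Ez => /(_ red_z).
  by rewrite balancedE height_cons letter_valL; lia.
have hz : height z <= 0.
  rewrite leNgt; apply/negP => hz; have [hz1|hz1] := eqVneq (height z) 1.
    have := @reduced_upper_unbalanced s U z [::] _ HU; rewrite cats0 => /(_ red_z).
    by rewrite balancedE height_cons letter_valL hz1.
  by have := avoid RR; rewrite steps_cross_up //; lia.
split; last by rewrite Ex height_cat height_cons letter_valL; lia.
by rewrite Ex steps_cat hp count_cat /= eqxx (count_memPn first) (count_memPn (avoid LL)).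
Qed.

Lemma descent_twice (h : int) x :
  h + height (LL :: x) < h -> (h, RR) \in steps h (LL :: x) ->
  (1 < count_mem (h, LL) (steps h (LL :: x)))%N.
Proof.
move=> below; rewrite /= in_cons xpair_eqE andbF /= => /steps_split [q [r [Ex hq _]]].
rewrite letter_valL in hq.
have : (h, LL) \in steps (h + 1) r.
  apply: steps_cross_down; move: below.
  by rewrite Ex height_cons height_cat height_cons letter_valR letter_valL; lia.
rewrite Ex steps_cat hq /= eqxx -has_pred1 has_count count_cat /=.
by rewrite xpair_eqE andbF letter_valR; lia.
Qed.

Lemma reduced_steps_head (h : int) x y :
  reduced (RR :: x) -> ~ perm_eq (steps h (RR :: x)) (steps h (LL :: y)).
Proof.
move=> red_x perm_xy.
have descends : (h, LL) \in steps h (RR :: x) by rewrite (perm_mem perm_xy) mem_head.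
have [once below] := reduced_descent_once red_x descends.
have := @descent_twice h y; rewrite -(perm_steps_height perm_xy) -(perm_mem perm_xy).
by rewrite -(permP perm_xy) once mem_head => /(_ below isT).
Qed.

Lemma reduced_steps_inj (h : int) x y :
  reduced x -> reduced y -> perm_eq (steps h x) (steps h y) -> x = y.
Proof.
elim: x y h => [|a x IH] [|b y] h red_x red_y perm_xy //;
  try by have := perm_steps_size perm_xy.
have ab : a = b.
  case: a b red_x red_y perm_xy => [] [] // red_x red_y perm_xy.
    by case: (reduced_steps_head red_x perm_xy).
  by rewrite perm_sym in perm_xy; case: (reduced_steps_head red_y perm_xy).
subst b; congr (_ :: _); rewrite /= perm_cons in perm_xy.
by apply: IH perm_xy; apply: (@reduced_catr [:: a]).
Qed.

Lemma big1_In (V : nmodType) (I : Type) (r : seq I) (F : I -> V) :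
  (forall i, List.In i r -> F i = 0) -> \sum_(i <- r) F i = 0.
Proof.
elim: r => [|i r IH] F0; first by rewrite big_nil.
by rewrite big_cons F0 ?add0r ?IH // => [j rj|]; [apply: F0; right | left].
Qed.

Lemma sum_tuple_indicator n (P : pred word) (x : word) :
  \sum_(t : n.-tuple bool | P t) ((x == t)%:R : CC) = ((size x == n) && P x)%:R.
Proof.
have [sx|sx] := eqVneq (size x) n; last first.
  by rewrite big1 // => t _; case: eqP => // xt; rewrite xt size_tuple eqxx in sx.
rewrite big_mkcond (bigD1 (Tuple (introT eqP sx))) //= eqxx big1 ?addr0 => [|t].
  by case: (P x).
by rewrite -val_eqE /= eq_sym => /negPf ->; case: (P t).
Qed.

Lemma equiv_words_invariant (P : pred word) X Y :
  (forall U F G V, nebal F -> nebal G -> P (U ++ F ++ G ++ V) = P (U ++ G ++ F ++ V)) ->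
  equiv_words X Y -> P X -> P Y.
Proof.
move=> P_swap [ts [ts_nebal diffE]] PX.
pose mass (f : word -> CC) := \sum_(t : (size X).-tuple bool | P t) f t.
have : mass (word_diff X Y) = 0.
  rewrite /mass (eq_bigr _ (fun (t : (size X).-tuple bool) _ => diffE t)) exchange_big /=.
  apply: big1_In => t /ts_nebal [bal_F bal_G].
  rewrite /jterm_coeff -mulr_sumr sumrB !sum_tuple_indicator P_swap //.
  by rewrite !size_cat [(size (jF t) + _)%N]addnCA subrr mulr0.
rewrite /mass /word_diff sumrB !sum_tuple_indicator eqxx PX => /eqP.
by rewrite subr_eq0 eqr_nat; case: (P Y); rewrite ?andbF.
Qed.

Lemma steps_swap (h : int) U F G V : balanced F -> balanced G ->
  perm_eq (steps h (U ++ F ++ G ++ V)) (steps h (U ++ G ++ F ++ V)).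
Proof.
rewrite !balancedE => /eqP hF /eqP hG.
by rewrite !steps_cat hF hG !addr0 perm_cat2l !catA perm_cat2r perm_catC.
Qed.

Lemma equiv_words_steps (h : int) X Y :
  equiv_words X Y -> perm_eq (steps h X) (steps h Y).
Proof.
move=> XY; rewrite perm_sym.
apply: (equiv_words_invariant (P := fun w => perm_eq (steps h w) (steps h X))) XY _ => //.
move=> U F G V /andP [_ bal_F] /andP [_ bal_G].
by rewrite (permPl (steps_swap h U V bal_F bal_G)).
Qed.

Lemma equiv_words_size X Y : equiv_words X Y -> size X = size Y.
Proof. by move/(equiv_words_steps 0)/perm_steps_size. Qed.

Lemma equiv_words_refl X : equiv_words X X.
Proof. by exists [::]; split => // w; rewrite big_nil /word_diff subrr. Qed.

Lemma equiv_words_trans X Y Z : equiv_words X Y -> equiv_words Y Z -> equiv_words X Z.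
Proof.
move=> [ts1 [nebal1 diff1]] [ts2 [nebal2 diff2]]; exists (ts1 ++ ts2); split.
  by move=> t in_t; case: (List.in_app_or _ _ _ in_t) => [/nebal1|/nebal2].
by move=> w; rewrite big_cat -diff1 -diff2 /word_diff /= addrA subrK.
Qed.

Lemma equiv_words_swap s U D t : nebal U -> nebal D ->
  equiv_words (s ++ D ++ U ++ t) (s ++ U ++ D ++ t).
Proof.
move=> bal_U bal_D; exists [:: JTerm 1 s D U t]; split; first by move=> _ [<-|[]].
by move=> w; rewrite big_seq1 /jterm_coeff /= mul1r.
Qed.

Lemma alph_leE u v : alph_le u v = (u <= v :> seqlexi bool)%O.
Proof. by elim: u v => [|a u IH] [|b v] //=; rewrite lexi_cons IH; case: a; case: b. Qed.

Lemma alph_le_catl s u v : alph_le (s ++ u) (s ++ v) = alph_le u v.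
Proof. by elim: s => //= a s ->; rewrite eqxx. Qed.

Lemma alph_min_reduced r : (forall w, equiv_words w r -> alph_le r w) -> reduced r.
Proof.
move=> r_min [s [U [D [t [HU [HD Er]]]]]].
have := r_min (s ++ D ++ U ++ t); rewrite Er; move/(_ (equiv_words_swap s t HU.1.1 HD.1.1)).
have [U' ->] := upper_prime_head HU; have [D' ->] := lower_prime_head HD.
by rewrite alph_le_catl.
Qed.

Lemma exists_alph_min W :
  exists2 r, equiv_words r W & forall w, equiv_words w W -> alph_le r w.
Proof.
pose P (t : (size W).-tuple bool) := `[< equiv_words t W >].
have PW : P (in_tuple W) by apply/asboolP/equiv_words_refl.
case: (arg_minP (fun t => val t : seqlexi bool) PW) => r /asboolP rW r_min.
exists (val r) => // w wW; have sw : size w == size W by rewrite (equiv_words_size wW).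
by rewrite alph_leE; apply: (r_min (Tuple sw)); apply/asboolP.
Qed.

Theorem proposition6p6 :
  forall W : word, balanced W ->
  exists r : word,
    [/\ equiv_words r W, reduced r,
        (forall r' : word, equiv_words r' W -> reduced r' -> r' = r)
      & (forall w : word, equiv_words w W -> alph_le r w)].
Proof.
(* The argument never uses that W is balanced. *)
move=> W _.
have [r rW r_min] := exists_alph_min W.
have red_r : reduced r by apply: alph_min_reduced => w /equiv_words_trans /(_ rW) /r_min.
exists r; split => // r' r'W red_r'.
apply: (@reduced_steps_inj 0) => //.
by apply: perm_trans (equiv_words_steps 0 r'W) _; rewrite perm_sym equiv_words_steps.
Qed.
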